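(* Assume: (i) the observed data $(x,y)$ follow the IMCA model with parameters $(h,T,\lambda,\mu)$; (ii) the mixing function $h:\mathbb{R}^d\to\mathbb{R}^d$ is invertible; (iii) each $T_i$ is differentiable and satisfies the strong exponential condition; (iv) there exist $k+1$ distinct points $y^0,\dots,y^k$ such that the $k\times k$ matrix $L=\big(\lambda(y^1)-\lambda(y^0),\dots,\lambda(y^k)-\lambda(y^0)\big)$ is invertible; (v) there are a differentiable $f:\mathbb{R}^d\to\mathbb{R}^d$, differentiable functions $H_l:\mathbb{R}\to\mathbb{R}^{m_l}$ ($l=1,\dots,d$) where $(m_1,\dots,m_d)$ is a permutation of $(k_1,\dots,k_d)$, and $g:\mathcal{Y}\to\mathbb{R}^k$ such that, with $H(f(x))=(H_1(f_1(x)),\dots,H_d(f_d(x)))\in\mathbb{R}^k$, the model $p_{f,g}(x\mid y)=\exp(-H(f(x))^\top g(y))/Z(y)$ satisfies $p_{f,g}(x\mid y)=p(x\mid y)$ for all $x,y$. Then there exist an invertible $k\times k$ matrix $A$ and a vector $b\in\mathbb{R}^k$ such that $H(f(x))=A\,T(z)+b$ for all $x$, where $z=h^{-1}(x)$.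
   Context: IMCA model: a latent $z\in\mathbb{R}^d$ and an observed auxiliary variable $y\in\mathcal{Y}\subset\mathbb{R}^{d_y}$, with $z\sim p(z\mid y)$ and observation $x=h(z)$, where $p(z\mid y)=\mu(z)\exp\big(\sum_{i=1}^d T_i(z_i)^\top\lambda_i(y)-\Gamma(y)\big)$; here $\mu$ is an arbitrary (not necessarily factorized) base measure density, $T_i:\mathbb{R}\to\mathbb{R}^{k_i}$ are sufficient statistics, $\lambda_i:\mathcal{Y}\to\mathbb{R}^{k_i}$, $\Gamma(y)$ is the log-normalizer, $k=\sum_i k_i$, $T=(T_1,\dots,T_d)$, $\lambda=(\lambda_1,\dots,\lambda_d)$ stacked into $\mathbb{R}^k$. The strong exponential condition for $T_i$: for every measurable $U\subset\mathbb{R}$ and every $\eta\in\mathbb{R}^{k_i}$, if $u\mapsto T_i(u)^\top\eta$ is constant on $U$, then $U$ has Lebesgue measure zero or $\eta=0$. *)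

From Stdlib Require Import Reals.
From HB Require Import structures.
From mathcomp Require Import all_boot all_fingroup.

Set Implicit Arguments.
Unset Strict Implicit.
Unset Printing Implicit Defensive.
Local Open Scope R_scope.

Definition Rsum (I : finType) (F : I -> R) : R := \big[Rplus/R0]_(i : I) F i.

Definition kdelta (I : eqType) (i j : I) : R := if i == j then R1 else R0.

Definition mx_invertible (I J : finType) (A : I -> J -> R) : Prop :=
  exists B : J -> I -> R,
    (forall i i' : I, Rsum (fun j => A i j * B j i') = kdelta i i') /\
    (forall j j' : J, Rsum (fun i => B j i * A i j') = kdelta j j').

Definition vec (n : nat) := 'I_n -> R.
Definition vadd n (u v : vec n) : vec n := fun i => u i + v i.
Definition vsub n (u v : vec n) : vec n := fun i => u i - v i.
(* l1 norm (all norms on R^n are equivalent) *)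
Definition vnorm n (u : vec n) : R := Rsum (fun i => Rabs (u i)).

Definition differentiable_vec (n m : nat) (F : vec n -> vec m) : Prop :=
  forall x : vec n, exists D : 'I_m -> 'I_n -> R,
    forall eps : R, 0 < eps -> exists delta : R, 0 < delta /\
      forall hh : vec n, vnorm hh < delta ->
        vnorm (fun i => F (vadd x hh) i - F x i - Rsum (fun j => D i j * hh j))
          <= eps * vnorm hh.

Definition outer_lt (E : R -> Prop) (eps : R) : Prop :=
  exists a b : nat -> R,
    (forall n, a n <= b n) /\
    (forall x, E x -> exists n, a n < x < b n) /\
    exists r, r < eps /\ forall N, sum_f_R0 (fun n => b n - a n) N <= r.

Definition lebesgue_null (E : R -> Prop) : Prop :=
  forall eps, 0 < eps -> outer_lt E eps.

Definition open_set (G : R -> Prop) : Prop :=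
  forall x, G x -> exists delta, 0 < delta /\
    forall y, Rabs (y - x) < delta -> G y.

Definition lebesgue_measurable (U : R -> Prop) : Prop :=
  forall eps, 0 < eps -> exists G, open_set G /\ (forall x, U x -> G x) /\
    outer_lt (fun x => G x /\ ~ U x) eps.

Definition strong_exponential (ki : nat) (T : R -> vec ki) : Prop :=
  forall U : R -> Prop, lebesgue_measurable U ->
  forall eta : vec ki,
    (exists c, forall u, U u -> Rsum (fun j => T u j * eta j) = c) ->
    lebesgue_null U \/ (forall j, eta j = 0).

Definition differentiable_R_vec (m : nat) (F : R -> vec m) : Prop :=
  forall (j : 'I_m) (x : R), exists l : R, derivable_pt_lim (fun u => F u j) x l.

(* Index set of R^k = R^{k_1} x ... x R^{k_d}: pairs (i, j) with j < k_i. *)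
Definition blk (d : nat) (ks : 'I_d -> nat) : finType := {i : 'I_d & 'I_(ks i)}.

Definition stackT (d : nat) (ks : 'I_d -> nat)
  (T : forall i : 'I_d, R -> vec (ks i)) (z : vec d) : blk ks -> R :=
  fun p => T (tag p) (z (tag p)) (tagged p).

Definition stackL (d : nat) (ks : 'I_d -> nat) (Y : Type)
  (lam : forall i : 'I_d, Y -> vec (ks i)) (y : Y) : blk ks -> R :=
  fun p => lam (tag p) y (tagged p).

Definition imca_density (d : nat) (ks : 'I_d -> nat) (Y : Type)
  (mu : vec d -> R) (T : forall i : 'I_d, R -> vec (ks i))
  (lam : forall i : 'I_d, Y -> vec (ks i)) (Gam : Y -> R)
  (z : vec d) (y : Y) : R :=
  mu z * exp (Rsum (fun p => stackT T z p * stackL lam y p) - Gam y).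

From Stdlib Require Import Reals.
From HB Require Import structures.
From mathcomp Require Import all_boot all_fingroup.
Set Warnings "-notation-overridden -ambiguous-paths".
From Stdlib Require Import Lra Lia Classical.
From mathcomp Require Import all_algebra Rstruct.
Import GRing.Theory.

(* Taking logarithms in [p_{f,g}(x|y) = p(x|y)] and subtracting the identity at
   [y^0] from the one at [y^t] eliminates the unknown terms [ln mu(z)] and
   [ln |det J(x)|], leaving [T(z)^T L = c - H(f(x))^T G] with [G] the matrix of
   differences of [g]. Multiplying by [L^-1] writes [T(z)] as an affine function
   [H(f(x))^T C + e]. A vector [eta] in the kernel of [C] would make [T(z)^T eta]
   constant in [z]; moving one coordinate of [z] at a time, this contradicts the
   strong exponential condition with [U = R], as [R] is not Lebesgue null. Hence
   the square matrix [C] is invertible, and inverting the affine relation gives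
   [H(f(x)) = A T(z) + b]. *)

Set Implicit Arguments.
Unset Strict Implicit.
Unset Printing Implicit Defensive.
Local Open Scope R_scope.

Lemma sum_f_R0_le_add (u : nat -> R) (N k : nat) :
  (forall n, 0 <= u n) -> sum_f_R0 u N <= sum_f_R0 u (N + k)%coq_nat.
Proof.
move=> u_ge0; elim: k => [|k IHk]; first by rewrite Nat.add_0_r; lra.
by rewrite Nat.add_succ_r /=; have := u_ge0 (S (N + k)%coq_nat); lra.
Qed.

Lemma le_sum_f_R0 (u : nat -> R) (N m : nat) :
  (forall n, 0 <= u n) -> (m <= N)%coq_nat -> u m <= sum_f_R0 u N.
Proof.
move=> u_ge0; elim: N => [|N IHN] le_mN.
  have -> : m = 0%nat by lia.
  by rewrite /=; lra.
have [->|ne_mSN] := Nat.eq_dec m (S N).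
  by rewrite /=; have := cond_pos_sum u N u_ge0; lra.
have := IHN ltac:(lia); have := u_ge0 (S N); rewrite /=; lra.
Qed.

(* Length of [(a, b) ∩ (-oo, x]]. *)
Definition trunc_len (a b x : R) : R := Rmax 0 (Rmin b x - a).

Lemma trunc_len_ge0 a b x : 0 <= trunc_len a b x.
Proof. exact: Rmax_l. Qed.

Lemma trunc_len_le a b x : a <= b -> trunc_len a b x <= b - a.
Proof.
move=> le_ab; apply: Rmax_lub; first lra.
by have := Rmin_l b x; lra.
Qed.

Lemma le_trunc_len a b x y : x <= y -> trunc_len a b x <= trunc_len a b y.
Proof.
move=> le_xy; apply: Rmax_lub; first exact: Rmax_l.
apply: Rle_trans (Rmax_r _ _); have := Rle_min_compat_l x y b le_xy; lra.
Qed.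

Lemma trunc_lenB a b x y : a < x -> x <= y -> y <= b ->
  trunc_len a b y - trunc_len a b x = y - x.
Proof.
move=> lt_ax le_xy le_yb; rewrite /trunc_len !Rmin_right; try lra.
by rewrite !Rmax_right; lra.
Qed.

Section IntervalCover.
Variables a b : nat -> R.
Hypothesis le_ab : forall n, a n <= b n.

Let covered_upto (x : R) : Prop :=
  0 <= x <= 1 /\ exists N, x <= sum_f_R0 (fun n => trunc_len (a n) (b n) x) N.

Let covered_upto_step x y m :
  covered_upto x -> a m < x -> x <= y -> y <= b m -> y <= 1 -> covered_upto y.
Proof.
move=> [x01 [N le_x_sum]] lt_ax le_xy le_yb le_y1; split; first lra.
exists (N + m)%coq_nat.
pose len z n := trunc_len (a n) (b n) z.
have le_sumN : sum_f_R0 (len x) N <= sum_f_R0 (len x) (N + m)%coq_nat.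
  by apply: sum_f_R0_le_add => n; exact: trunc_len_ge0.
have le_gain : len y m - len x m <= sum_f_R0 (fun n => len y n - len x n) (N + m)%coq_nat.
  apply: (le_sum_f_R0 (u := fun n => len y n - len x n)); last lia.
  by move=> n; have := le_trunc_len (a n) (b n) le_xy; rewrite /len; lra.
rewrite minus_sum (trunc_lenB lt_ax le_xy le_yb) in le_gain.
rewrite /len in le_sumN le_gain; lra.
Qed.

(* The supremum of the points up to which the lengths cover is 1: otherwise the
   interval covering the supremum would push the covered region past it. *)
Lemma interval_cover_length :
  (forall x, 0 <= x <= 1 -> exists n, a n < x < b n) ->
  exists N, 1 <= sum_f_R0 (fun n => b n - a n) N.
Proof.
move=> cover.
have cov0 : covered_upto 0.
  by split; [lra | exists 0%nat; apply: cond_pos_sum => n; exact: trunc_len_ge0].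
have [|s [ub_s lub_s]] := completeness covered_upto _ (ex_intro _ 0 cov0).
  by exists 1 => x [x01 _]; lra.
have s01 : 0 <= s <= 1 by split; [exact: ub_s | apply: lub_s => x [x01 _]; lra].
have [m lt_ams] := cover s s01.
have [x [cov_x lt_ax]] : exists x, covered_upto x /\ a m < x.
  apply: NNPP => no_x; have : s <= a m; last lra.
  by apply: lub_s => x cov_x; apply: Rnot_lt_le => lt_ax; apply: no_x; exists x.
have le_xs := ub_s x cov_x.
pose y := Rmin 1 ((s + b m) / 2).
have le_y1 : y <= 1 by exact: Rmin_l.
have le_yb : y <= b m by have := Rmin_r 1 ((s + b m) / 2); rewrite -/y; lra.
have le_xy : x <= y by apply: Rmin_glb; lra.
have cov_y := covered_upto_step cov_x lt_ax le_xy le_yb le_y1.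
have le_ys := ub_s y cov_y.
have y1 : y = 1.
  rewrite /y in le_ys *; have [le_1h|lt_h1] := Rle_lt_dec 1 ((s + b m) / 2).
    by rewrite Rmin_left.
  by rewrite Rmin_right in le_ys; lra.
rewrite y1 in cov_y; have [_ [N le_1_sum]] := cov_y.
exists N; apply: Rle_trans le_1_sum _.
by apply: sum_Rle => n _; exact: trunc_len_le.
Qed.

End IntervalCover.

Lemma not_lebesgue_null_setT : ~ lebesgue_null (fun _ => True).
Proof.
move=> null; have [a [b [le_ab [cover [r [lt_r1 sum_le]]]]]] := null 1 Rlt_0_1.
have [N] := interval_cover_length le_ab (fun x _ => cover x I).
by have := sum_le N; lra.
Qed.

Lemma lebesgue_measurable_setT : lebesgue_measurable (fun _ => True).
Proof.
move=> eps eps_gt0; exists (fun _ => True); split; [|split] => //.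
  by move=> x _; exists 1; split; [lra | by []].
exists (fun _ => 0), (fun _ => 0); split; first by move=> n; lra.
split; first by move=> x [].
by exists 0; split => // N; elim: N => [|N IHN] /=; lra.
Qed.

Lemma strong_exponential_coef0 (ki : nat) (Ti : R -> vec ki) (eta : vec ki) :
  strong_exponential Ti ->
  (exists c, forall u, Rsum (fun j => Ti u j * eta j) = c) -> forall j, eta j = 0.
Proof.
move=> sexp [c const_c].
have [null|//] := sexp _ lebesgue_measurable_setT eta (ex_intro _ c (fun u _ => const_c u)).
by case: not_lebesgue_null_setT.
Qed.

Lemma Rsum_blk (d : nat) (ks : 'I_d -> nat) (F : blk ks -> R) :
  Rsum F = Rsum (fun i : 'I_d => Rsum (fun j : 'I_(ks i) => F (Tagged (fun i => 'I_(ks i)) j))).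
Proof.
rewrite /Rsum (sig_big_dep (op := Rplus) (idx := R0) predT (fun _ => predT)
  (fun i j => F (Tagged (fun i => 'I_(ks i)) j))).
by apply: eq_big => // -[i j].
Qed.

Lemma card_blk_perm (d : nat) (ks ms : 'I_d -> nat) (sigma : {perm 'I_d}) :
  (forall l, ms l = ks (sigma l)) -> #|blk ks| = #|blk ms|.
Proof.
move=> ms_ks; rewrite /blk !order.tagnat.card.
rewrite [RHS](eq_bigr (fun i => ks (sigma i))); last by move=> i _; rewrite ms_ks.
exact: (reindex_inj (@perm_inj _ sigma)).
Qed.

(* Moving a single coordinate [z_i] with the others frozen at [0] reduces the
   statement to [strong_exponential_coef0] for the block [i]. *)
Lemma stackT_coef0 (d : nat) (ks : 'I_d -> nat) (T : forall i : 'I_d, R -> vec (ks i))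
  (eta : blk ks -> R) :
  (forall i, strong_exponential (T i)) ->
  (exists c, forall z, Rsum (fun p => stackT T z p * eta p) = c) -> forall p, eta p = 0.
Proof.
move=> sexp [c const_c] [i j].
pose coord (u : R) : vec d := fun i' => if i' == i then u else 0.
pose S (i' : 'I_d) (u : R) :=
  Rsum (fun j : 'I_(ks i') => T i' u j * eta (Tagged (fun i => 'I_(ks i)) j)).
pose rest := \big[Rplus/R0]_(i' | i' != i) S i' 0.
have split_c u : S i u + rest = c.
  rewrite -(const_c (coord u)) Rsum_blk /Rsum [RHS](bigD1 i) //=.
  congr (_ + _); first by apply: eq_bigr => k _; rewrite /stackT /coord /= eqxx.
  apply: eq_bigr => i' /negbTE ne_i'i; apply: eq_bigr => k _.
  by rewrite /stackT /coord /= ne_i'i.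
apply: (strong_exponential_coef0 (eta := fun j => eta (Tagged _ j)) (sexp i)).
by exists (c - rest) => u; rewrite -(split_c u) /Rminus Rplus_assoc Rplus_opp_r Rplus_0_r.
Qed.

Lemma ln_exp_div_eq (a v z m j : R) : 0 < z -> 0 <= m -> 0 < j ->
  exp (- a) / z = m * exp v * j -> a + v = - ln z - ln m - ln j.
Proof.
move=> z_gt0 m_ge0 j_gt0 eq_exp.
have lhs_gt0 : 0 < exp (- a) / z by apply: Rdiv_lt_0_compat; [exact: exp_pos | by []].
have m_gt0 : 0 < m.
  case: m_ge0 => // m0; rewrite -m0 in eq_exp; rewrite eq_exp in lhs_gt0; lra.
have := f_equal ln eq_exp.
have exp_v_gt0 := exp_pos v.
rewrite /Rdiv ln_mult ?ln_Rinv ?ln_mult ?ln_exp //; first lra.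
- exact: Rmult_lt_0_compat.
- exact: exp_pos.
- exact: Rinv_0_lt_compat.
Qed.

Lemma RsumE (I : finType) (F : I -> R) : Rsum F = (\sum_(i : I) F i)%R.
Proof. by []. Qed.

Lemma Rsum_ext (I : finType) (F G : I -> R) : (forall i, F i = G i) -> Rsum F = Rsum G.
Proof. by move=> eq_FG; apply: eq_bigr => i _; exact: eq_FG. Qed.

Lemma RsumB (I : finType) (F G : I -> R) : Rsum (fun i => F i - G i) = Rsum F - Rsum G.
Proof. exact: sumrB. Qed.

Lemma kdeltaC (I : eqType) (i j : I) : kdelta i j = kdelta j i.
Proof. by rewrite /kdelta eq_sym. Qed.

Lemma mx_invertibleT (I J : finType) (A : I -> J -> R) :
  mx_invertible A -> mx_invertible (fun j i => A i j).
Proof.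
move=> [B [AB BA]]; exists (fun i j => B j i); split.
  by move=> j j'; rewrite kdeltaC -BA; apply: Rsum_ext => i; exact: Rmult_comm.
by move=> i i'; rewrite kdeltaC -AB; apply: Rsum_ext => j; exact: Rmult_comm.
Qed.

Lemma kdelta_inj (I J : eqType) (e : I -> J) (i i' : I) :
  injective e -> kdelta (e i) (e i') = kdelta i i'.
Proof. by move=> e_inj; rewrite /kdelta (inj_eq e_inj). Qed.

Local Open Scope ring_scope.

Lemma sum_kdelta (I : finType) (F : I -> R) (i0 : I) :
  \sum_(i : I) F i * kdelta i i0 = F i0.
Proof.
rewrite (bigD1 i0) //= /kdelta eqxx big1 ?addr0 ?mulr1 // => i /negbTE ->.
by rewrite mulr0.
Qed.

Lemma mx_invertible_ker0_ord (n : nat) (C : 'I_n -> 'I_n -> R) :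
  (forall eta : 'I_n -> R, (forall i, Rsum (fun j => C i j * eta j) = 0) -> forall j, eta j = 0) ->
  mx_invertible C.
Proof.
move=> ker0; pose Cm : 'M[R]_n := \matrix_(i, j) C i j.
have unitC : Cm \in unitmx.
  rewrite unitmxE unitfE -det_tr; apply/negP => /det0P [v v_neq0 vC].
  move/negP: v_neq0; apply; apply/eqP/rowP => j; rewrite mxE.
  apply: (ker0 (fun j => v 0 j)) => i; rewrite RsumE.
  have := congr1 (fun M : 'M[R]_(1, n) => M 0 i) vC; rewrite !mxE => vCi.
  by rewrite -[RHS]vCi; apply: eq_bigr => k _; rewrite !mxE mulrC.
have entry1 i i' : (1%:M : 'M[R]_n) i i' = kdelta i i'.
  by rewrite mxE /kdelta; case: (i == i').
exists (fun j i => invmx Cm j i); split => i i'; rewrite -entry1.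
  by rewrite -(mulmxV unitC) mxE RsumE; apply: eq_bigr => k _; rewrite mxE.
by rewrite -(mulVmx unitC) mxE RsumE; apply: eq_bigr => k _; rewrite mxE.
Qed.

Lemma mx_invertible_reindex (I J K L : finType) (C : I -> J -> R)
  (eI : K -> I) (eJ : L -> J) :
  bijective eI -> bijective eJ -> mx_invertible (fun k l => C (eI k) (eJ l)) -> mx_invertible C.
Proof.
move=> [fI eIK fIK] [fJ eJK fJK] [B [CB BC]].
have sumI (F : I -> R) : \sum_(i : I) F i = \sum_(k : K) F (eI k).
  by rewrite (reindex eI) //; exists fI => ? _; [exact: eIK | exact: fIK].
have sumJ (F : J -> R) : \sum_(j : J) F j = \sum_(l : L) F (eJ l).
  by rewrite (reindex eJ) //; exists fJ => ? _; [exact: eJK | exact: fJK].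
exists (fun j i => B (fJ j) (fI i)); split => [i i' | j j'].
  rewrite RsumE sumJ -[i in RHS]fIK -[i' in RHS]fIK kdelta_inj; last exact: can_inj eIK.
  by rewrite -CB; apply: eq_bigr => l _; rewrite eJK fIK.
rewrite RsumE sumI -[j in RHS]fJK -[j' in RHS]fJK kdelta_inj; last exact: can_inj eJK.
by rewrite -BC; apply: eq_bigr => k _; rewrite eIK fJK.
Qed.

Lemma mx_invertible_ker0 (I J : finType) (C : I -> J -> R) : #|J| = #|I| ->
  (forall eta : J -> R, (forall i, Rsum (fun j => C i j * eta j) = 0) -> forall j, eta j = 0) ->
  mx_invertible C.
Proof.
move=> card_JI ker0.
pose eI (k : 'I_#|I|) : I := enum_val k.
pose eJ (k : 'I_#|I|) : J := enum_val (cast_ord (esym card_JI) k).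
have bij_eI : bijective eI by exists enum_rank => k; rewrite /eI ?enum_valK ?enum_rankK.
have bij_eJ : bijective eJ.
  exists (fun j => cast_ord card_JI (enum_rank j)) => k.
    by rewrite /eJ enum_valK cast_ordKV.
  by rewrite /eJ cast_ordK enum_rankK.
apply: (mx_invertible_reindex bij_eI bij_eJ); apply: mx_invertible_ker0_ord => eta Ceta k.
have [fJ eJK fJK] := bij_eJ.
rewrite -[k]eJK; apply: (ker0 (fun j => eta (fJ j))) => i.
have [fI eIK fIK] := bij_eI.
rewrite -(Ceta (fI i)) RsumE (reindex eJ); last by exists fJ => ? _; [exact: eJK | exact: fJK].
by apply: eq_bigr => l _; rewrite eJK fIK.
Qed.

Lemma linear_relation_solve (X : Type) (K M N : finType)
  (L : K -> N -> R) (B : N -> K -> R)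
  (LB : forall p p', Rsum (fun t => L p t * B t p') = kdelta p p')
  (G : M -> N -> R) (c : N -> R) (tau : X -> K -> R) (phi : X -> M -> R) :
  (forall x t, Rsum (fun p => tau x p * L p t) = c t - Rsum (fun q => phi x q * G q t)) ->
  exists (C : M -> K -> R) (e : K -> R),
    forall x p, tau x p = Rsum (fun q => phi x q * C q p) + e p.
Proof.
move=> rel; exists (fun q p => - \sum_t G q t * B t p), (fun p => \sum_t c t * B t p).
move=> x p; rewrite -[LHS](sum_kdelta (tau x) p).
under eq_bigr => p' _ do rewrite -LB RsumE mulr_sumr.
rewrite exchange_big /=.
under eq_bigr => t _ do (under eq_bigr => p' _ do rewrite mulrA; rewrite -mulr_suml -RsumE rel).
under eq_bigr => t _ do rewrite mulrBl RsumE mulr_suml.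
rewrite sumrB addrC; congr (_ + _).
rewrite exchange_big /= -sumrN; apply: eq_bigr => q _.
by rewrite mulrN mulr_sumr; congr (- _); apply: eq_bigr => t _; rewrite mulrA.
Qed.

(* The kernel of [C] is trivial because any [eta] in it makes
   [tau x . eta = e . eta] independent of [x]. *)
Lemma affine_inverse (X : Type) (K M : finType) (C : M -> K -> R) (e : K -> R)
  (tau : X -> K -> R) (phi : X -> M -> R) :
  (forall x p, tau x p = Rsum (fun q => phi x q * C q p) + e p) ->
  (forall eta : K -> R, (exists c, forall x, Rsum (fun p => tau x p * eta p) = c) ->
     forall p, eta p = 0) ->
  #|K| = #|M| ->
  exists (A : M -> K -> R) (b : M -> R), mx_invertible A /\
    forall x q, phi x q = Rsum (fun p => A q p * tau x p) + b q.
Proof.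
move=> tau_phi tau_nondeg card_KM.
have ker0 eta : (forall q, Rsum (fun p => C q p * eta p) = 0) -> forall p, eta p = 0.
  move=> C_eta; apply: tau_nondeg; exists (\sum_p e p * eta p) => x.
  rewrite RsumE; under eq_bigr => p _ do rewrite tau_phi mulrDl mulr_suml.
  rewrite big_split /= exchange_big /= big1 ?add0r // => q _.
  under eq_bigr => p _ do rewrite -mulrA.
  by rewrite -mulr_sumr -RsumE C_eta mulr0.
have [D [CD DC]] := mx_invertible_ker0 card_KM ker0.
exists (fun q p => D p q), (fun q => - \sum_p e p * D p q); split.
  by apply: mx_invertibleT; exists C.
move=> x q'; rewrite -[LHS](sum_kdelta (phi x) q').
under eq_bigr => q _ do rewrite -CD RsumE mulr_sumr.
rewrite exchange_big /= RsumE -sumrN -big_split /=; apply: eq_bigr => p _.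
under eq_bigr => q _ do rewrite mulrA.
rewrite -mulr_suml -RsumE.
have -> : Rsum (fun q => phi x q * C q p) = tau x p - e p by rewrite tau_phi addrK.
by rewrite mulrBl mulrC.
Qed.

Local Close Scope ring_scope.

Section LogLikelihood.
Variables (d dy : nat) (Ymem : vec dy -> Prop) (ks ms : 'I_d -> nat).
Variables (T : forall i : 'I_d, R -> vec (ks i)) (lam : forall i : 'I_d, vec dy -> vec (ks i)).
Variables (mu : vec d -> R) (Gam : vec dy -> R) (Jac : vec d -> R) (hinv f : vec d -> vec d).
Variables (H : forall l : 'I_d, R -> vec (ms l)) (g : vec dy -> blk ms -> R) (Z : vec dy -> R).
Hypotheses (mu_ge0 : forall z, 0 <= mu z) (Jac_gt0 : forall x, 0 < Jac x)
  (Z_gt0 : forall y, Ymem y -> 0 < Z y).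
Hypothesis eq_density : forall (x : vec d) (y : vec dy), Ymem y ->
  exp (- Rsum (fun q => stackT H (f x) q * g y q)) / Z y
  = imca_density mu T lam Gam (hinv x) y * Jac x.

Lemma ln_density_eq x y : Ymem y ->
  Rsum (fun q => stackT H (f x) q * g y q)
  + (Rsum (fun p => stackT T (hinv x) p * stackL lam y p) - Gam y)
  = - ln (Z y) - ln (mu (hinv x)) - ln (Jac x).
Proof. by move=> Yy; apply: ln_exp_div_eq; [exact: Z_gt0 | | | exact: eq_density]. Qed.

(* The unknown terms [ln (mu (hinv x))] and [ln (Jac x)] cancel in the difference. *)
Lemma ln_density_diff x y y' : Ymem y -> Ymem y' ->
  Rsum (fun p => stackT T (hinv x) p * (stackL lam y' p - stackL lam y p))
  = (Gam y' - Gam y - ln (Z y') + ln (Z y))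
    - Rsum (fun q => stackT H (f x) q * (g y' q - g y q)).
Proof.
move=> Yy Yy'.
rewrite (Rsum_ext (F := fun p => stackT T (hinv x) p * (stackL lam y' p - stackL lam y p))
                  (G := fun p => stackT T (hinv x) p * stackL lam y' p
                                 - stackT T (hinv x) p * stackL lam y p));
  last by move=> p; rewrite Rmult_minus_distr_l.
rewrite (Rsum_ext (F := fun q => stackT H (f x) q * (g y' q - g y q))
                  (G := fun q => stackT H (f x) q * g y' q - stackT H (f x) q * g y q));
  last by move=> q; rewrite Rmult_minus_distr_l.
have := ln_density_eq x Yy; have := ln_density_eq x Yy'; rewrite !RsumB; lra.
Qed.

End LogLikelihood.

Theorem mainTheorem8
  (d dy : nat) (Ymem : vec dy -> Prop) (ks : 'I_d -> nat)
  (h : vec d -> vec d)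
  (T : forall i : 'I_d, R -> vec (ks i))
  (lam : forall i : 'I_d, vec dy -> vec (ks i))
  (mu : vec d -> R) (Gam : vec dy -> R)
  (Hmu : forall z, 0 <= mu z)
  (Jac : vec d -> R) (HJac : forall x, 0 < Jac x)
  (hinv : vec d -> vec d)
  (Hh1 : forall x, h (hinv x) = x) (Hh2 : forall z, hinv (h z) = z)
  (HTd : forall i, differentiable_R_vec (T i))
  (HTs : forall i, strong_exponential (T i))
  (ys : 'I_(#|blk ks|).+1 -> vec dy)
  (Hys : forall t, Ymem (ys t)) (Hyinj : injective ys)
  (HL : mx_invertible (fun (p : blk ks) (t : 'I_#|blk ks|) =>
           stackL lam (ys (lift ord0 t)) p - stackL lam (ys ord0) p))
  (f : vec d -> vec d) (Hf : differentiable_vec f)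
  (ms : 'I_d -> nat) (sigma : {perm 'I_d}) (Hms : forall l, ms l = ks (sigma l))
  (H : forall l : 'I_d, R -> vec (ms l))
  (HHd : forall l, differentiable_R_vec (H l))
  (g : vec dy -> blk ms -> R) (Z : vec dy -> R)
  (HZ : forall y, Ymem y -> 0 < Z y)
  (Heq : forall (x : vec d) (y : vec dy), Ymem y ->
     exp (- Rsum (fun q => stackT H (f x) q * g y q)) / Z y
     = imca_density mu T lam Gam (hinv x) y * Jac x) :
  exists (A : blk ms -> blk ks -> R) (b : blk ms -> R),
    mx_invertible A /\
    forall (x : vec d) (q : blk ms),
      stackT H (f x) q = Rsum (fun p => A q p * stackT T (hinv x) p) + b q.
Proof.
have T_nondeg (eta : blk ks -> R) :
    (exists c, forall x, Rsum (fun p => stackT T (hinv x) p * eta p) = c) ->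
    forall p, eta p = 0.
  move=> [c const_c]; apply: (stackT_coef0 HTs); exists c => z.
  by rewrite -[z in stackT T z]Hh2; exact: const_c.
have [B [LB _]] := HL.
have [C [e tau_phi]] := linear_relation_solve LB (fun x t =>
  ln_density_diff Hmu HJac HZ Heq x (Hys ord0) (Hys (lift ord0 t))).
exact: affine_inverse tau_phi T_nondeg (card_blk_perm Hms).
Qed.
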